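(* Let $d\ge1$ and let $X$ be $\mathbb{R}^d$ equipped with a norm $\|\cdot\|$ such that $X$ is uniformly smooth, i.e. its modulus of smoothness $$\rho(u):=\sup_{\|x\|=\|y\|=1}\Big(\tfrac12(\|x+uy\|+\|x-uy\|)-1\Big)$$ satisfies $\lim_{u\to0}\rho(u)/u=0$. Let $B=\{x:\|x\|\le1\}$, $B^o(x)=\{y:\|y-x\|<1\}$, and let $\{e^j\}_{j=1}^d$ be the standard basis of $\mathbb{R}^d$. For $a>0$ define $x^j:=ae^j$, $j=1,\dots,d$, and $x^{d+1}:=-a\sum_{j=1}^de^j$. Then there exists $a>0$ such that $$B\subset\bigcup_{j=1}^{d+1}B^o(x^j).$$ *)

From HB Require Import structures.
From mathcomp Require Import all_boot all_order all_algebra.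
From mathcomp Require Import all_classical all_reals all_analysis.
Set Implicit Arguments. Unset Strict Implicit. Unset Printing Implicit Defensive.
Import Order.TTheory GRing.Theory Num.Theory.
Import numFieldNormedType.Exports.
Local Open Scope ring_scope.
Local Open Scope classical_set_scope.

Definition is_norm (R : realType) (d : nat) (N : 'rV[R]_d -> R) : Prop :=
  [/\ (forall x, 0 <= N x),
      (forall x, N x = 0 -> x = 0),
      (forall (c : R) x, N (c *: x) = `|c| * N x) &
      (forall x y, N (x + y) <= N x + N y)].

Definition modulus_smoothness (R : realType) (d : nat) (N : 'rV[R]_d -> R)
  (u : R) : R :=
  sup [set t | exists x y : 'rV[R]_d, N x = 1 /\ N y = 1 /\
               t = (N (x + u *: y) + N (x - u *: y)) / 2 - 1].

Definition uniformly_smooth (R : realType) (d : nat) (N : 'rV[R]_d -> R) : Prop :=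
  modulus_smoothness N u / u @[u --> 0^'] --> (0 : R).

Definition std_basis (R : realType) (d : nat) (j : 'I_d) : 'rV[R]_d :=
  \row_(k < d) (k == j)%:R.

From HB Require Import structures.
From mathcomp Require Import all_boot all_order all_algebra.
From mathcomp Require Import all_classical all_reals all_analysis.
From mathcomp Require Import ring lra.
Set Implicit Arguments. Unset Strict Implicit. Unset Printing Implicit Defensive.
Import Order.TTheory GRing.Theory Num.Theory.
Import numFieldNormedType.Exports.
Local Open Scope ring_scope.

(* Shifting coordinates by t = |y|_oo writes (c a / (2d+1)) y as a nonnegative combination
   of x^1, ..., x^(d+1) of total weight at most c t <= 1, where c is the constant of
   equivalence of the norm with the sup norm.  If a unit vector y were at distance >= 1
   from every x^j, uniform smoothness would put every y + x^j in the ball of radius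
   1 + o(a), hence by convexity also (1 + c a / (2d+1)) y: impossible for small a.
   Points of norm < 1 follow from the sphere by convexity. *)

Section RowBasis.
Variables (R : realType) (d : nat).
Local Notation e := (std_basis R).

Lemma row_std_basis_decomp (x : 'rV[R]_d) : x = \sum_(k < d) x ord0 k *: e k.
Proof.
apply/rowP => i; rewrite summxE (bigD1 i) //= big1 => [|k /negPf ki].
  by rewrite !mxE eqxx mulr1 addr0.
by rewrite !mxE eq_sym ki mulr0.
Qed.

Lemma std_basis_neq0 (j : 'I_d) : e j != 0.
Proof. by apply/eqP => /rowP /(_ j) /eqP; rewrite !mxE eqxx oner_eq0. Qed.

Lemma mx_norm_coord (x : 'rV[R]_d) k : `|x ord0 k| <= `|x|.
Proof.
rewrite [X in _ <= X](_ : _ = mx_norm x) // mx_normrE; apply/bigmax_geP; right => /=.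
by exists (ord0, k).
Qed.

Lemma row_shifted_decomp (x : 'rV[R]_d) :
  x = \sum_(k < d) (x ord0 k + `|x|) *: e k - `|x| *: \sum_(k < d) e k.
Proof.
under eq_bigr do rewrite scalerDl.
by rewrite big_split /= -row_std_basis_decomp scaler_sumr addrK.
Qed.

End RowBasis.

Section Norm.
Variables (R : realType) (d : nat) (N : 'rV[R]_d -> R).
Hypothesis hN : is_norm N.
Local Notation e := (std_basis R).

Lemma N_ge0 x : 0 <= N x. Proof. by case: hN. Qed.
Lemma N_eq0 x : N x = 0 -> x = 0. Proof. by case: hN => _ H _ _; exact: H. Qed.
Lemma NZ c x : N (c *: x) = `|c| * N x. Proof. by case: hN. Qed.
Lemma N_triangle x y : N (x + y) <= N x + N y. Proof. by case: hN. Qed.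

Lemma N0 : N 0 = 0.
Proof. by rewrite -(scale0r 0) NZ normr0 mul0r. Qed.

Lemma NN x : N (- x) = N x.
Proof. by rewrite -scaleN1r NZ normrN normr1 mul1r. Qed.

Lemma N_gt0 x : x != 0 -> 0 < N x.
Proof. by move=> x0; rewrite lt0r N_ge0 andbT; apply: contra_neq x0; exact: N_eq0. Qed.

Lemma N_sum_le (I : Type) (r : seq I) (P : pred I) (F : I -> 'rV[R]_d) :
  N (\sum_(i <- r | P i) F i) <= \sum_(i <- r | P i) N (F i).
Proof.
apply: (big_ind2 (fun y1 y2 => N y1 <= y2)); first by rewrite N0.
  by move=> x1 x2 y1 y2 h1 h2; apply: le_trans (N_triangle _ _) _; exact: lerD.
by [].
Qed.

Lemma N_le_mx_norm x : N x <= `|x| * \sum_(k < d) N (e k).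
Proof.
rewrite {1}(row_std_basis_decomp x) mulr_sumr.
apply: le_trans (N_sum_le _ _ _) _; apply: ler_sum => k _; rewrite NZ.
by apply: ler_wpM2r; [exact: N_ge0 | exact: mx_norm_coord].
Qed.

Lemma N_continuous : continuous N.
Proof.
move=> x; apply/(@cvgrPdist_lt _ _ _ (nbhs x)) => eps eps0.
set K := \sum_(k < d) N (e k).
have K1 : 0 < K + 1 by rewrite ltr_wpDl // sumr_ge0 // => k _; exact: N_ge0.
near=> y.
have xy_close : `|x - y| * (K + 1) < eps.
  rewrite -ltr_pdivlMr //.
  near: y; exact: (@cvgr_dist_lt _ _ _ (nbhs x) _ id x cvg_id _ (divr_gt0 eps0 K1)).
have xy_small : N (x - y) < eps.
  apply: le_lt_trans (N_le_mx_norm _) (le_lt_trans _ xy_close).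
  by rewrite ler_wpM2l // lerDl.
apply: le_lt_trans xy_small.
have : N x <= N y + N (x - y) by rewrite -[X in N X <= _](subrKC y) N_triangle.
have : N y <= N x + N (x - y).
  by rewrite -opprB NN -[X in N X <= _](subrKC x) N_triangle.
rewrite ler_norml; lra.
Unshelve. all: by end_near.
Qed.

Lemma N_unit_scale x : x != 0 -> N ((N x)^-1 *: x) = 1.
Proof. by move=> x0; rewrite NZ normfV gtr0_norm ?N_gt0 // mulVf // gt_eqF ?N_gt0. Qed.

Lemma N_unit_direction : (0 < d)%N -> forall x, exists2 y, N y = 1 & x = N x *: y.
Proof.
move=> hd x; have [->|x0] := eqVneq x 0; last first.
  exists ((N x)^-1 *: x); first exact: N_unit_scale.
  by rewrite scalerA mulfV ?scale1r // gt_eqF ?N_gt0.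
by exists ((N (e (Ordinal hd)))^-1 *: e (Ordinal hd)); rewrite ?N_unit_scale ?std_basis_neq0 // N0 scale0r.
Qed.

(* Equivalence with the sup norm: [N] attains a positive minimum on the compact sup-norm sphere. *)
Lemma N_lower_bound : (0 < d)%N -> exists2 c : R, 0 < c & forall x, c * `|x| <= N x.
Proof.
move=> hd.
pose A := [set x : 'rV[R]_d | `|x| = 1]%classic.
have A0 : (A !=set0)%classic.
  pose u := e (Ordinal hd).
  exists (`|u|^-1 *: u); rewrite /A /= normrZ normfV normr_id mulVf //.
  by rewrite normr_eq0 std_basis_neq0.
have cA : compact A.
  apply: bounded_closed_compact.
    by exists 1; split => // M M1 x /= ->; exact: ltW.
  apply: (@preimage_closed _ _ (@Num.Def.normr R 'rV[R]_d) [set 1]%classic).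
    by move=> z _; exact: norm_continuous.
  exact: closed_eq.
have [u /[!inE] u1 umin] := EVT_min_rV A0 cA (continuous_subspaceT N_continuous).
have u0 : u != 0 by apply: contra_eq_neq u1 => ->; rewrite normr0 eq_sym oner_neq0.
exists (N u); first exact: N_gt0.
move=> x; have [->|x0] := eqVneq x 0; first by rewrite normr0 mulr0 N_ge0.
have nx : 0 < `|x| by rewrite normr_gt0.
have := umin (`|x|^-1 *: x).
rewrite inE /A /= normrZ normfV normr_id mulVf ?gt_eqF // => /(_ erefl).
rewrite NZ normfV normr_id => ux.
by rewrite mulrC -ler_pdivlMl // mulrC.
Qed.

Lemma N_scale_sub_lt s y w : 0 <= s <= 1 -> N (y - w) < 1 -> N w < 1 ->
  N (s *: y - w) < 1.
Proof.
case/andP=> s0 s1 yw1 w1.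
have -> : s *: y - w = s *: (y - w) - (1 - s) *: w.
  by rewrite scalerBr scalerBl scale1r opprB addrA subrK.
apply: le_lt_trans (N_triangle _ _) _.
rewrite NN !NZ ger0_norm // ger0_norm ?subr_ge0 //.
set m := Num.max (N (y - w)) (N w).
have m1 : m < 1 by rewrite gt_max yw1 w1.
have : s * N (y - w) <= s * m by rewrite ler_wpM2l // le_max lexx.
have : (1 - s) * N w <= (1 - s) * m by rewrite ler_wpM2l ?subr_ge0 // le_max lexx orbT.
lra.
Qed.

(* The set [{v | N (y + v) <= r}] is convex and contains [0]. *)
Lemma N_add_subconvex_le (I : Type) (s : seq I) y (mu : I -> R) (w : I -> 'rV[R]_d) r :
  N y <= r -> (forall i, 0 <= mu i) -> \sum_(i <- s) mu i <= 1 ->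
  (forall i, N (y + w i) <= r) -> N (y + \sum_(i <- s) mu i *: w i) <= r.
Proof.
move=> yr mu0 mu1 ywr; set M := \sum_(i <- s) mu i.
have -> : y + \sum_(i <- s) mu i *: w i = (1 - M) *: y + \sum_(i <- s) mu i *: (y + w i).
  rewrite scalerBl scale1r /M scaler_suml -addrA; congr (_ + _).
  rewrite addrC -sumrB; apply: eq_bigr => i _.
  by rewrite scalerDr [_ + mu i *: w i]addrC addrK.
apply: le_trans (N_triangle _ _) _; apply: le_trans (lerD (lexx _) (N_sum_le _ _ _)) _.
rewrite NZ ger0_norm ?subr_ge0 //.
have : \sum_(i <- s) N (mu i *: (y + w i)) <= M * r.
  rewrite /M mulr_suml; apply: ler_sum => i _.
  by rewrite NZ ger0_norm // ler_wpM2l.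
have : (1 - M) * N y <= (1 - M) * r by rewrite ler_wpM2l ?subr_ge0.
lra.
Qed.

Lemma modulus_smoothness_ge y w : N y = 1 -> 0 < N w ->
  N (y + w) + N (y - w) <= 2 + 2 * modulus_smoothness N (N w).
Proof.
move=> y1 w0; set u := N w.
pose z := u^-1 *: w.
have z1 : N z = 1 by rewrite N_unit_scale //; apply: contraTneq w0 => ->; rewrite N0 ltxx.
have uz : u *: z = w by rewrite scalerA mulfV ?gt_eqF // scale1r.
pose S := [set t | exists x y : 'rV[R]_d, N x = 1 /\ N y = 1 /\
               t = (N (x + u *: y) + N (x - u *: y)) / 2 - 1]%classic.
have yzS : S ((N (y + u *: z) + N (y - u *: z)) / 2 - 1) by exists y, z.
have supS : has_sup S.
  split; first by eexists; exact: yzS.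
  exists `|u| => t [x [v [x1 [v1 ->]]]].
  have : N (x + u *: v) <= 1 + `|u|.
    by apply: le_trans (N_triangle _ _) _; rewrite x1 NZ v1 mulr1.
  have : N (x - u *: v) <= 1 + `|u|.
    by apply: le_trans (N_triangle _ _) _; rewrite x1 NN NZ v1 mulr1.
  lra.
have := sup_upper_bound supS yzS; rewrite uz /modulus_smoothness -/u; lra.
Qed.

Lemma uniformly_smoothP : uniformly_smooth N -> forall eps : R, 0 < eps ->
  exists2 del : R, 0 < del &
    forall u, 0 < u < del -> modulus_smoothness N u < eps * u.
Proof.
move=> hs eps eps0.
have /nbhs_ballP [del del0 hdel] := @cvgr_dist_lt _ R^o _ (0^')%classic
  ltac:(exact: _) (fun u => modulus_smoothness N u / u) 0 hs _ eps0.
exists del => // u /andP[u0 udel].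
have /hdel /(_ (lt0r_neq0 u0)) : ball (0 : R) del u.
  by rewrite /ball /= sub0r normrN gtr0_norm.
rewrite /= sub0r normrN => /(le_lt_trans (ler_norm _)).
by rewrite ltr_pdivrMr.
Qed.

Lemma N_reflect_le eps del y w :
  (forall u, 0 < u < del -> modulus_smoothness N u < eps * u) ->
  N y = 1 -> N w < del -> 1 <= N (y - w) -> N (y + w) <= 1 + 2 * eps * N w.
Proof.
move=> hrho y1 wdel far; have [->|w0] := eqVneq w 0.
  by rewrite addr0 N0 mulr0 addr0 y1.
have wpos := N_gt0 w0.
have := modulus_smoothness_ge y1 wpos.
have := hrho (N w); rewrite wpos wdel => /(_ isT).
lra.
Qed.

Lemma unit_sphere_covered c a be y :
  0 < c -> (forall x, c * `|x| <= N x) -> 0 < a ->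
  0 <= be -> be < c / (2 * d%:R + 1) * a ->
  (forall j, 1 <= N (y - a *: e j) -> N (y + a *: e j) <= 1 + be) ->
  (1 <= N (y - - a *: \sum_(k < d) e k) -> N (y + - a *: \sum_(k < d) e k) <= 1 + be) ->
  N y = 1 ->
  (exists j, N (y - a *: e j) < 1) \/ N (y - (- a *: \sum_(k < d) e k)) < 1.
Proof.
move=> c0 hc a0 be0 hbe reflect_ej reflect_S y1.
set S := \sum_(k < d) e k; set sig := c / (2 * d%:R + 1) in hbe *.
have D0 : 0 < 2 * d%:R + 1 :> R by rewrite ltr_wpDl ?mulr_ge0 ?ler0n.
have sig0 : 0 < sig by rewrite divr_gt0.
case: (pselect (exists j, N (y - a *: e j) < 1)) => [|no_j]; [by left | right].
rewrite ltNge; apply/negP => far_S.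
have far_ej j : 1 <= N (y - a *: e j).
  by rewrite leNgt; apply/negP => hj; apply: no_j; exists j.
set t := `|y|; pose lam k := y ord0 k + t.
have lam_bound k : 0 <= lam k <= 2 * t.
  by have := mx_norm_coord y k; rewrite -/t ler_norml /lam; lra.
pose mu (o : option 'I_d) := sig * (if o is Some k then lam k else t).
pose w (o : option 'I_d) := if o is Some k then a *: e k else - a *: S.
pose s := None :: map Some (index_enum 'I_d).
have sum_mu : \sum_(o <- s) mu o <= 1.
  rewrite big_cons big_map -/(\sum_(k < d) mu (Some k)) -mulr_sumr -mulrDr.
  have sum_lam : \sum_k lam k <= d%:R * (2 * t).
    rewrite [d%:R * _]mulr_natl -[in X in _ <= X](card_ord d) -sumr_const.
    by apply: ler_sum => k _; case/andP: (lam_bound k).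
  have := hc y; rewrite y1 -/t => ct.
  apply: le_trans ct; apply: le_trans (_ : sig * ((2 * d%:R + 1) * t) <= _).
    by apply: ler_wpM2l; [exact: ltW | lra].
  by rewrite /sig mulrA divfK ?gt_eqF.
have sum_w : \sum_(o <- s) mu o *: w o = (sig * a) *: y.
  rewrite big_cons big_map -/(\sum_(k < d) mu (Some k) *: w (Some k)) /=.
  rewrite [in RHS](row_shifted_decomp y) -/t -/S scalerBr [in RHS]scaler_sumr [LHS]addrC.
  congr (_ + _); last by rewrite !scalerA -scaleNr; congr (_ *: _); rewrite /mu /=; ring.
  by apply: eq_bigr => k _; rewrite !scalerA; congr (_ *: _); rewrite /mu /lam /=; ring.
have dilate : N ((1 + sig * a) *: y) <= 1 + be.
  rewrite scalerDl scale1r -sum_w; apply: N_add_subconvex_le => //.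
  - by rewrite y1 lerDl.
  - move=> o; apply: mulr_ge0; first exact: ltW.
    by case: o => [k|] /=; [case/andP: (lam_bound k) | exact: normr_ge0].
  - by case=> [k|] /=; [exact: reflect_ej | exact: reflect_S].
have sa0 := mulr_gt0 sig0 a0.
by move: dilate; rewrite NZ y1 mulr1 ger0_norm; lra.
Qed.

Lemma N_std_basis_le_sum k : N (e k) <= \sum_(i < d) N (e i).
Proof. by rewrite (bigD1 k) //= lerDl sumr_ge0 // => i _; exact: N_ge0. Qed.

Lemma ball_covered c a eps del : (0 < d)%N ->
  0 < c -> (forall x, c * `|x| <= N x) -> 0 < a -> 0 <= eps ->
  (forall u, 0 < u < del -> modulus_smoothness N u < eps * u) ->
  a * \sum_(k < d) N (e k) < Num.min del 1 ->
  2 * eps * (a * \sum_(k < d) N (e k)) < c / (2 * d%:R + 1) * a ->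
  forall x, N x <= 1 ->
    (exists j, N (x - a *: e j) < 1) \/ N (x - (- a *: \sum_(k < d) e k)) < 1.
Proof.
move=> hd c0 hc a0 eps0 hrho; set h := a * _; rewrite lt_min => /andP[h_del h1] hbe x x1.
have ej_h j : N (a *: e j) <= h.
  by rewrite NZ gtr0_norm //; apply: ler_wpM2l; [exact: ltW | exact: N_std_basis_le_sum].
have S_h : N (- a *: \sum_(k < d) e k) <= h.
  by rewrite NZ normrN gtr0_norm //; apply: ler_wpM2l; [exact: ltW | exact: N_sum_le].
have [y y1 xy] := N_unit_direction hd x; rewrite xy.
have reflect_le w : N w <= h -> 1 <= N (y - w) -> N (y + w) <= 1 + 2 * eps * h.
  move=> wh far; apply: le_trans (N_reflect_le hrho y1 (le_lt_trans wh h_del) far) _.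
  by rewrite lerD2l ler_wpM2l ?mulr_ge0.
have h0 : 0 <= h by apply: le_trans (ej_h (Ordinal hd)); exact: N_ge0.
have sphere := @unit_sphere_covered c a (2 * eps * h) y c0 hc a0
  (mulr_ge0 (mulr_ge0 (ler0n _ 2) eps0) h0) hbe (fun j => reflect_le _ (ej_h j))
  (reflect_le _ S_h) y1.
have Nx01 : 0 <= N x <= 1 by rewrite N_ge0.
case: sphere => [[j yj]|yS]; [left; exists j | right];
  apply: N_scale_sub_lt => //; exact: le_lt_trans h1.
Qed.

End Norm.

Theorem proposition3p3 (R : realType) (d : nat) (hd : (0 < d)%N)
  (N : 'rV[R]_d -> R) (hN : is_norm N) (hsmooth : uniformly_smooth N) :
  exists a : R, 0 < a /\
    forall x : 'rV[R]_d, N x <= 1 ->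
      (exists j : 'I_d, N (x - a *: std_basis R j) < 1) \/
      N (x - (- a *: \sum_(j < d) std_basis R j)) < 1.
Proof.
have [c c0 hc] := N_lower_bound hN hd.
set K := \sum_(k < d) N (std_basis R k).
have K0 : 0 <= K by rewrite sumr_ge0 // => k _; exact: N_ge0.
pose sig := c / (2 * d%:R + 1).
have sig0 : 0 < sig by rewrite divr_gt0 // ltr_wpDl ?mulr_ge0 ?ler0n.
pose eps := sig / (4 * (K + 1)).
have eps0 : 0 < eps by rewrite divr_gt0 // mulr_gt0 // ltr_wpDl.
have [del del0 hrho] := uniformly_smoothP hsmooth eps0.
pose a := Num.min del 1 / (2 * (K + 1)).
have min0 : 0 < Num.min del 1 by rewrite lt_min del0 ltr01.
have a0 : 0 < a by rewrite divr_gt0 // mulr_gt0 // ltr_wpDl.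
have aK : a * (K + 1) = Num.min del 1 / 2 by rewrite /a; field; rewrite gt_eqF // ltr_wpDl.
exists a; split => //; apply: (ball_covered hN hd c0 hc a0 (ltW eps0) hrho).
- by rewrite -/K; lra.
- have : 2 * eps * (a * (K + 1)) = sig * a / 2.
    by rewrite aK /eps /a; field; rewrite gt_eqF // ltr_wpDl.
  by rewrite -/K -/sig; have := mulr_gt0 sig0 a0; have := mulr_gt0 eps0 a0; nra.
Qed.
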